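(* For every positive integer $n$, \[ \sum_{k=1}^{n}{n\brace k}\binom{-1/2}{k}k!\,H_k\,(-1)^n2^n=\sum_{k=0}^{n-1}\binom{n}{k+1}E_k(1). \]
   Context: ${n\brace k}$ is the Stirling number of the second kind, $H_k=\sum_{i=1}^k1/i$, $\binom{x}{k}=x(x-1)\cdots(x-k+1)/k!$. The Euler polynomials $E_n(x)$ are defined by $\sum_{n\ge0}E_n(x)\frac{t^n}{n!}=\frac{2}{e^t+1}e^{xt}$. *)

From mathcomp Require Import all_boot all_order all_algebra.
Set Implicit Arguments. Unset Strict Implicit. Unset Printing Implicit Defensive.
Import Order.TTheory GRing.Theory Num.Theory.
Local Open Scope ring_scope.

Fixpoint stirling2 (n k : nat) : nat :=
  match n, k with
  | 0, 0 => 1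
  | 0, _.+1 => 0
  | _.+1, 0 => 0
  | n'.+1, k'.+1 => (k'.+1 * stirling2 n' k'.+1 + stirling2 n' k')%N
  end.

Definition harmonic (k : nat) : rat := \sum_(1 <= i < k.+1) (i%:R)^-1.

Definition gbinom (x : rat) (k : nat) : rat :=
  (\prod_(i < k) (x - i%:R)) / (k`!)%:R.

(* Euler polynomials E_n(x), defined by sum_n E_n(x) t^n/n! = 2 e^{xt}/(e^t+1).
   Comparing coefficients of t^n in (e^t + 1) * G(t) = 2 e^{xt} gives
     E_n(x) + sum_{k=0}^{n} C(n,k) E_k(x) = 2 x^n,
   i.e. E_n(x) = x^n - 1/2 * sum_{k<n} C(n,k) E_k(x), which determines the
   sequence uniquely. euler_seq x n = [:: E_0(x); ...; E_n(x)]. *)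
Fixpoint euler_seq (x : rat) (n : nat) : seq rat :=
  match n with
  | 0 => [:: 1]
  | n'.+1 =>
      let s := euler_seq x n' in
      rcons s (x ^+ n'.+1 - 2%:R^-1 * \sum_(k < n'.+1) ('C(n'.+1, k))%:R * nth 0 s k)
  end.

Definition eulerE (n : nat) (x : rat) : rat := nth 0 (euler_seq x n) n.

From mathcomp Require Import all_boot all_order all_algebra.
From mathcomp Require Import ring.
Set Implicit Arguments. Unset Strict Implicit. Unset Printing Implicit Defensive.
Import GRing.Theory Num.Theory.
Local Open Scope ring_scope.

(* Read each sequence through its exponential generating function: binomial
   convolution [bconv] is then multiplication and the shift [n |-> f n.+1] is
   differentiation. Put u = e^(-2t) - 1. The left-hand side generates
   F = sum_k binom(-1/2, k) H_k u^k and the right-hand side generates the G with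
   G(0) = 0 and G' - G = e^t E(t), where E(t) = 2 e^t / (e^t + 1) generates the
   E_k(1). Since (1 + u)^(-1/2) = e^t and H_(k+1) = H_k + 1/(k+1), one finds
   u (F' - F) = -2 (e^t - 1), whereas (e^t + 1) (G' - G) = 2 e^(2t). Hence both
   F' - F and G' - G solve (e^t + 1) u X = -2 (e^(2t) - 1); the factor (e^t + 1) u
   has a nonzero linear term and no constant term, so it can be cancelled, and
   F = G because F(0) = G(0) = 0. *)

Section BinomialConvolution.
Variable R : comPzRingType.
Implicit Types (f g h : nat -> R) (a c : R).

Definition bconv f g n : R := \sum_(j < n.+1) 'C(n, j)%:R * (f j * g (n - j)%N).

Definition kdelta n : R := (n == 0)%N%:R.

Definition expseq c n : R := c ^+ n.

Lemma eq_bconv {f f' g g'} : f =1 f' -> g =1 g' -> bconv f g =1 bconv f' g'.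
Proof. by move=> ef eg n; apply: eq_bigr => j _; rewrite ef eg. Qed.

Lemma bconvC f g : bconv f g =1 bconv g f.
Proof.
move=> n; rewrite /bconv (reindex_inj rev_ord_inj) /=; apply: eq_bigr => j _.
have le_jn : (j <= n)%N := ltn_ord j.
by rewrite subSS bin_sub // subKn // [f _ * _]mulrC.
Qed.

Lemma bconvDl f g h :
  bconv (fun m => f m + g m) h =1 (fun n => bconv f h n + bconv g h n).
Proof. by move=> n; rewrite -big_split; apply: eq_bigr => j _; rewrite mulrDl mulrDr. Qed.

Lemma bconvNl f h : bconv (fun m => - f m) h =1 (fun n => - bconv f h n).
Proof. by move=> n; rewrite -sumrN; apply: eq_bigr => j _; rewrite mulNr mulrN. Qed.

Lemma bconvZl a f h : bconv (fun m => a * f m) h =1 (fun n => a * bconv f h n).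
Proof. by move=> n; rewrite mulr_sumr; apply: eq_bigr => j _; ring. Qed.

Lemma bconvBl f g h :
  bconv (fun m => f m - g m) h =1 (fun n => bconv f h n - bconv g h n).
Proof. by move=> n; rewrite bconvDl bconvNl. Qed.

Lemma bconvDr f g h :
  bconv h (fun m => f m + g m) =1 (fun n => bconv h f n + bconv h g n).
Proof. by move=> n; rewrite bconvC bconvDl !(bconvC h). Qed.

Lemma bconvNr f h : bconv h (fun m => - f m) =1 (fun n => - bconv h f n).
Proof. by move=> n; rewrite bconvC bconvNl bconvC. Qed.

Lemma bconvZr a f h : bconv h (fun m => a * f m) =1 (fun n => a * bconv h f n).
Proof. by move=> n; rewrite bconvC bconvZl bconvC. Qed.

Lemma bconvBr f g h :
  bconv h (fun m => f m - g m) =1 (fun n => bconv h f n - bconv h g n).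
Proof. by move=> n; rewrite bconvDr bconvNr. Qed.

Lemma bconv_kdeltal f : bconv kdelta f =1 f.
Proof.
move=> n; rewrite /bconv big_ord_recl /= big1 ?addr0 ?bin0 ?subn0 ?mul1r //.
by move=> i _; rewrite mul0r mulr0.
Qed.

Lemma bconv_kdeltar f : bconv f kdelta =1 f.
Proof. by move=> n; rewrite bconvC bconv_kdeltal. Qed.

Lemma bconv0 f g : bconv f g 0 = f 0%N * g 0%N.
Proof. by rewrite /bconv big_ord1 mul1r. Qed.

Lemma bconvS f g n :
  bconv f g n.+1 = bconv (fun m => f m.+1) g n + bconv f (fun m => g m.+1) n.
Proof.
rewrite /bconv big_ord_recl /= bin0 subn0.
under eq_bigr => j _ do rewrite /bump /= add1n binS natrD mulrDl.
rewrite big_split /= addrA [RHS]addrC; congr (_ + _).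
rewrite big_ord_recr /= bin_small // mul0r addr0.
rewrite [in RHS]big_ord_recl /= bin0 subn0; congr (_ + _).
by apply: eq_bigr => j _; rewrite /bump /= add1n subSS -subSn.
Qed.

Lemma bconvA f g h : bconv f (bconv g h) =1 bconv (bconv f g) h.
Proof.
move=> n; elim: n f g h => [|n IH] f g h; first by rewrite !bconv0 mulrA.
rewrite bconvS (eq_bconv (frefl f) (bconvS g h)) bconvDr !IH.
by rewrite [RHS]bconvS (eq_bconv (bconvS f g) (frefl h)) bconvDl addrA.
Qed.

Lemma bconv_expseq a c : bconv (expseq a) (expseq c) =1 expseq (a + c).
Proof.
move=> n; rewrite /expseq addrC exprDn; apply: eq_bigr => j _.
by rewrite mulr_natl [a ^+ _ * _]mulrC.
Qed.

Lemma sum_binS f n :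
  \sum_(k < n.+1) 'C(n.+1, k.+1)%:R * f k
  = \sum_(k < n) 'C(n, k.+1)%:R * f k + bconv f (expseq 1) n.
Proof.
under eq_bigr => k _ do rewrite binS natrD mulrDl.
rewrite big_split /= big_ord_recr /= bin_small // mul0r addr0.
by congr (_ + _); rewrite /bconv; apply: eq_bigr => k _; rewrite /expseq expr1n mulr1.
Qed.

Lemma expseq0 : expseq 0 =1 kdelta.
Proof. by move=> [|n]; rewrite /expseq /kdelta ?expr0 // expr0n. Qed.

End BinomialConvolution.
Arguments kdelta {R} n.

Lemma bconvI {R : numDomainType} (a x y : nat -> R) :
  a 0%N = 0 -> a 1%N != 0 -> bconv a x =1 bconv a y -> x =1 y.
Proof.
move=> a0 a1 eq_axy; pose z m := x m - y m.
suff z0 n : z n = 0 by move=> n; apply/eqP; rewrite -subr_eq0 -/(z n) z0.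
have az0 m : bconv a z m = 0 by rewrite bconvBr eq_axy subrr.
elim/ltn_ind: n => n IH; have := az0 n.+1.
rewrite /bconv big_ord_recl a0 mul0r mulr0 add0r big_ord_recl big1 => [|i _].
  rewrite addr0 bin1 subSS subn0 => /eqP.
  by rewrite !mulf_eq0 pnatr_eq0 (negbTE a1) => /eqP.
by rewrite /= subSS IH ?mulr0 // subnSK // leq_subr.
Qed.

Section ExpMinusOnePowers.
Variables (R : comPzRingType) (c : R).
Implicit Types (y : nat -> R).

(* [(e^(ct) - 1)^k] generates [k! c^n S(n, k)]. *)
Definition expm1_pow k n : R := k`!%:R * c ^+ n * (stirling2 n k)%:R.

Lemma stirling2_small n k : (n < k)%N -> stirling2 n k = 0%N.
Proof. by elim: n k => [|n IH] [|k] //= lt_nk; rewrite !IH ?muln0 // ltnW. Qed.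

Lemma stirling2SS n k :
  stirling2 n.+1 k.+1 = (k.+1 * stirling2 n k.+1 + stirling2 n k)%N.
Proof. by []. Qed.

Lemma stirling2_n1 n : stirling2 n.+1 1 = 1%N.
Proof. by elim: n => [|n IH] //; rewrite stirling2SS IH. Qed.

Lemma expm1_pow_small k n : (n < k)%N -> expm1_pow k n = 0.
Proof. by move=> lt_nk; rewrite /expm1_pow stirling2_small ?mulr0. Qed.

Lemma expm1_pow0 : expm1_pow 0 =1 kdelta.
Proof. by move=> [|n]; rewrite /expm1_pow /kdelta /= ?mulr0 // expr0 !mul1r. Qed.

Lemma expm1_pow1 : expm1_pow 1 =1 (fun n => expseq c n - kdelta n).
Proof.
move=> [|n]; first by rewrite /expm1_pow /= mulr0 subrr.
by rewrite /expm1_pow stirling2_n1 /= mul1r mulr1 subr0.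
Qed.

Lemma expm1_powS k n :
  expm1_pow k n.+1 = c * k%:R * (expm1_pow k n + expm1_pow k.-1 n).
Proof.
case: k => [|k]; first by rewrite /expm1_pow /= !mulr0 mul0r.
by rewrite /expm1_pow stirling2SS factS exprS !natrM natrD; ring.
Qed.

Lemma bconv_expm1_pow k : bconv (expm1_pow 1) (expm1_pow k) =1 expm1_pow k.+1.
Proof.
move=> n; elim: n k => [|n IH] k.
  by rewrite bconv0 [expm1_pow 1 0]expm1_pow_small // mul0r expm1_pow_small.
rewrite bconvS (eq_bconv (expm1_powS 1) (frefl _)) (eq_bconv (frefl _) (expm1_powS k)).
rewrite bconvZl bconvDl bconvZr bconvDr (eq_bconv expm1_pow0 (frefl _)) bconv_kdeltal.
rewrite expm1_powS !IH; case: k => [|k]; first by rewrite mulr0 mul0r addr0.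
by rewrite -natr1; ring.
Qed.

(* [subst_expm1 y] generates [sum_k y k (e^(ct) - 1)^k]; terms with k > n vanish at n. *)
Definition subst_expm1 y n : R := \sum_(k < n.+1) y k * expm1_pow k n.

Lemma subst_expm1_widen y n N :
  (n < N)%N -> subst_expm1 y n = \sum_(k < N) y k * expm1_pow k n.
Proof.
move=> lt_nN; rewrite -(subnK lt_nN); elim: (N - n.+1)%N => [|d IH] //.
by rewrite addSn big_ord_recr /= -IH expm1_pow_small ?mulr0 ?addr0 // addnS ltnS leq_addl.
Qed.

Lemma subst_expm1S y n :
  subst_expm1 y n.+1 = subst_expm1 (fun k => c * (k%:R * y k + k.+1%:R * y k.+1)) n.
Proof.
rewrite /subst_expm1; under eq_bigr => k _ do rewrite expm1_powS !mulrDr.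
rewrite big_split /= big_ord_recr /= expm1_pow_small // !mulr0 addr0.
rewrite [X in _ + X]big_ord_recl mulr0 mul0r mulr0 add0r -big_split /=.
by apply: eq_bigr => k _; rewrite /bump add1n add0n; ring.
Qed.

Lemma bconv_subst_expm1 y :
  bconv (expm1_pow 1) (subst_expm1 (fun k => y k.+1))
  =1 (fun n => subst_expm1 y n - y 0%N * kdelta n).
Proof.
move=> n; transitivity (\sum_(k < n.+1) y k.+1 * expm1_pow k.+1 n).
  rewrite /bconv; under eq_bigr => j _ do
    rewrite (@subst_expm1_widen _ _ n.+1 (leq_subr j n)) !mulr_sumr.
  rewrite exchange_big; apply: eq_bigr => k _ /=.
  by rewrite -bconv_expm1_pow /bconv mulr_sumr; apply: eq_bigr => j _; ring.
rewrite (subst_expm1_widen y (leqnSn n.+1)) [in RHS]big_ord_recl expm1_pow0.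
by rewrite addrC addKr.
Qed.

End ExpMinusOnePowers.

Lemma gbinom0 x : gbinom x 0 = 1.
Proof. by rewrite /gbinom big_ord0 divr1. Qed.

Lemma gbinomS x k : k.+1%:R * gbinom x k.+1 = (x - k%:R) * gbinom x k.
Proof.
rewrite /gbinom big_ord_recr /= factS natrM.
by field; rewrite nat1r !pnatr_eq0 -lt0n fact_gt0.
Qed.

(* Newton's binomial series [sum_k binom(x, k) (e^(ct) - 1)^k = e^(cxt)]. *)
Lemma subst_expm1_gbinom (c x : rat) : subst_expm1 c (gbinom x) =1 expseq (c * x).
Proof.
elim=> [|n IH].
  by rewrite /subst_expm1 big_ord1 gbinom0 expm1_pow0 mul1r.
rewrite subst_expm1S /expseq exprS -[_ ^+ n]IH /subst_expm1 mulr_sumr.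
by apply: eq_bigr => k _; rewrite gbinomS; ring.
Qed.

Lemma harmonic0 : harmonic 0 = 0.
Proof. by rewrite /harmonic big_geq. Qed.

Lemma harmonicS k : harmonic k.+1 = harmonic k + k.+1%:R^-1.
Proof. by rewrite /harmonic big_nat_recr. Qed.

Definition gbinom_harmonic_series (c x : rat) : nat -> rat :=
  subst_expm1 c (fun k => gbinom x k * harmonic k).

Lemma gbinom_harmonic_seriesS c x n :
  gbinom_harmonic_series c x n.+1
  = c * x * gbinom_harmonic_series c x n + c * subst_expm1 c (fun k => gbinom x k.+1) n.
Proof.
rewrite /gbinom_harmonic_series subst_expm1S /subst_expm1 !mulr_sumr -big_split.
apply: eq_bigr => k _ /=.
have -> : k.+1%:R * (gbinom x k.+1 * harmonic k.+1)
          = k.+1%:R * gbinom x k.+1 * harmonic k + gbinom x k.+1.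
  by rewrite harmonicS; field; rewrite nat1r pnatr_eq0.
by rewrite gbinomS; ring.
Qed.

(* With u = e^(ct) - 1 and F = sum_k binom(x, k) H_k u^k: u (F' - cx F) = c (e^(cxt) - 1). *)
Lemma bconv_gbinom_harmonic_series c x :
  bconv (expm1_pow c 1)
    (fun n => gbinom_harmonic_series c x n.+1 - c * x * gbinom_harmonic_series c x n)
  =1 (fun n => c * (expseq (c * x) n - kdelta n)).
Proof.
have series_diff : (fun n => gbinom_harmonic_series c x n.+1
                              - c * x * gbinom_harmonic_series c x n)
    =1 (fun n => c * subst_expm1 c (fun k => gbinom x k.+1) n).
  by move=> n; rewrite gbinom_harmonic_seriesS addrC addKr.
move=> n; rewrite (eq_bconv (frefl _) series_diff) bconvZr bconv_subst_expm1.
by rewrite subst_expm1_gbinom gbinom0 mul1r.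
Qed.

Lemma size_euler_seq x n : size (euler_seq x n) = n.+1.
Proof. by elim: n => [|n IH] //=; rewrite size_rcons IH. Qed.

Lemma nth_euler_seq x n k : (k <= n)%N -> nth 0 (euler_seq x n) k = eulerE k x.
Proof.
elim: n => [|n IH]; first by rewrite leqn0 => /eqP ->.
rewrite leq_eqVlt => /orP [/eqP -> // | lt_kn].
by rewrite [euler_seq x n.+1]/= nth_rcons size_euler_seq lt_kn IH.
Qed.

Lemma eulerES x n :
  eulerE n.+1 x = x ^+ n.+1 - 2%:R^-1 * \sum_(k < n.+1) 'C(n.+1, k)%:R * eulerE k x.
Proof.
rewrite {1}/eulerE [euler_seq x n.+1]/= nth_rcons size_euler_seq ltnn eqxx.
by congr (_ - _ * _); apply: eq_bigr => k _; rewrite nth_euler_seq // -ltnS.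
Qed.

(* The defining relation E(x, t) (e^t + 1) = 2 e^(xt) of the Euler polynomials. *)
Lemma bconv_eulerE x :
  bconv (eulerE^~ x) (fun n => expseq 1 n + kdelta n) =1 (fun n => 2%:R * expseq x n).
Proof.
move=> n; rewrite bconvDr bconv_kdeltar /bconv /expseq.
case: n => [|n]; first by rewrite big_ord1 /eulerE /= subnn bin0 !expr0; ring.
rewrite big_ord_recr /= subnn binn eulerES.
under eq_bigr do rewrite expr1n mulr1.
by field.
Qed.

Lemma gbinom_harmonic_series_expand c x n :
  gbinom_harmonic_series c x n
  = \sum_(1 <= k < n.+1) (stirling2 n k)%:R * gbinom x k * k`!%:R * harmonic k * c ^+ n.
Proof.
rewrite /gbinom_harmonic_series /subst_expm1 big_ord_recl harmonic0 mulr0 mul0r add0r.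
rewrite big_add1 big_mkord; apply: eq_bigr => k _.
by rewrite /expm1_pow; ring.
Qed.

Definition euler1_binomial_sum n : rat := \sum_(k < n) 'C(n, k.+1)%:R * eulerE k 1.

Local Notation F := (gbinom_harmonic_series (-2) (- 2%:R^-1)).
Local Notation G := euler1_binomial_sum.

Lemma bconv_diff_F :
  bconv (expm1_pow (-2) 1) (fun n => F n.+1 - F n)
  =1 (fun n => -2 * (expseq 1 n - kdelta n)).
Proof.
have cx1 : -2 * - 2%:R^-1 = 1 :> rat by field.
move=> n; have := bconv_gbinom_harmonic_series (-2) (- 2%:R^-1) n; rewrite cx1 => <-.
by apply: eq_bconv => // m; rewrite mul1r.
Qed.

Lemma bconv_diff_G :
  bconv (fun n => expseq 1 n + kdelta n) (fun n => G n.+1 - G n)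
  =1 (fun n => 2%:R * expseq 2%:R n).
Proof.
have diffG : (fun n => G n.+1 - G n) =1 bconv (eulerE^~ 1) (expseq 1).
  by move=> n; rewrite /G (sum_binS (eulerE^~ 1)) addrC addKr.
move=> n; rewrite (eq_bconv (frefl _) diffG) bconvA (eq_bconv (bconvC _ _) (frefl _)).
by rewrite (eq_bconv (bconv_eulerE 1) (frefl _)) bconvZl bconv_expseq.
Qed.

Lemma F_eq_G : F =1 G.
Proof.
pose a := bconv (fun n => expseq 1 n + kdelta n) (expm1_pow (-2 : rat) 1).
have a0 : a 0%N = 0 by rewrite /a bconv0 expm1_pow_small ?mulr0.
have a1 : a 1%N != 0.
  by rewrite /a /bconv !big_ord_recl big_ord0 !expm1_pow1 /expseq /kdelta /=.
have aF : bconv a (fun n => F n.+1 - F n)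
           =1 (fun n => -2 * (expseq 2%:R n - kdelta n)).
  move=> n; rewrite -bconvA (eq_bconv (frefl _) bconv_diff_F) bconvZr bconvBr.
  by rewrite bconv_kdeltar bconvDl bconv_expseq bconv_kdeltal; ring.
have aG : bconv a (fun n => G n.+1 - G n)
           =1 (fun n => -2 * (expseq 2%:R n - kdelta n)).
  move=> n; rewrite (eq_bconv (bconvC _ _) (frefl _)) -bconvA.
  rewrite (eq_bconv (frefl _) bconv_diff_G) bconvZr (eq_bconv (expm1_pow1 _) (frefl _)).
  by rewrite bconvBl bconv_expseq bconv_kdeltal addNr expseq0; ring.
have diffFG := bconvI a0 a1 (fun n => etrans (aF n) (esym (aG n))).
elim=> [|n IH].
  by rewrite /gbinom_harmonic_series /subst_expm1 big_ord1 harmonic0 mulr0 mul0r /G big_ord0.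
by move: (diffFG n); rewrite IH => /addIr.
Qed.

Theorem mainTheorem9 (n : nat) : (0 < n)%N ->
  \sum_(1 <= k < n.+1)
     (stirling2 n k)%:R * gbinom (- 2%:R^-1) k * (k`!)%:R * harmonic k
       * (-1) ^+ n * 2%:R ^+ n
  = \sum_(0 <= k < n) ('C(n, k.+1))%:R * eulerE k 1 :> rat.
Proof.
move=> _; rewrite big_mkord -/(G n) -F_eq_G gbinom_harmonic_series_expand.
by apply: eq_bigr => k _; rewrite -mulrA -exprMn mulN1r.
Qed.
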